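(* Let $k$ be a field, $H_4$ the Sweedler four-dimensional Hopf algebra, and $E_2\subset H_4$ the subalgebra generated by $h$ (the algebra of dual numbers), made an $H_4$-comodule algebra via the restriction of $\Delta$. Then $\mathcal{H}^0(H_4,E_2)=k^\times$ and $\mathcal{H}^1(H_4,E_2)$ has exactly two elements, the classes of $1\otimes 1$ and $1\otimes g$.
   Context: $H_4$ is the $k$-algebra generated by $g,h$ with $g^2=1$, $h^2=0$, $gh+hg=0$, with Hopf structure $\Delta(g)=g\otimes g$, $\Delta(h)=h\otimes g+1\otimes h$, $\varepsilon(g)=1$, $\varepsilon(h)=0$, $\sigma(g)=g$, $\sigma(gh)=gh$. Since $\Delta(E_2)\subseteq E_2\otimes H_4$, $E_2$ is an $H_4$-comodule algebra. General non-abelian Hopf cohomology of a Hopf algebra $H$ with coefficients in an $H$-comodule algebra $E$ (coaction $\Delta_E$ an algebra map): with $d^0(x)=\Delta_E(x)$, $d^1(x)=x\otimes1$ and $d^0(X)=(\Delta_E\otimes\mathrm{id})(X)$, $d^1(X)=(\mathrm{id}\otimes\Delta_H)(X)$, $d^2(X)=X\otimes1$: $\mathcal{H}^0(H,E)=\{x\in E^\times: d^0(x)=d^1(x)\}$; $\mathcal{Z}^1(H,E)=\{X\in(E\otimes H)^\times: d^2(X)d^0(X)=d^1(X)\}$; $E^\times$ acts on the right by $X\leftharpoonup x=d^1(x^{-1})Xd^0(x)$; $\mathcal{H}^1(H,E)$ is the orbit set. $D^\times$ denotes units of an algebra $D$. *)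

From HB Require Import structures.
From mathcomp Require Import all_boot all_order all_algebra.
Set Implicit Arguments. Unset Strict Implicit. Unset Printing Implicit Defensive.
Import GRing.Theory.
Local Open Scope ring_scope.

Section Sweedler.
Variable k : fieldType.

(* an element is its coordinate vector; c p q r = coefficient of basis
   vector r in the product (basis p) * (basis q). *)
Definition bmul (I : finType) (c : I -> I -> I -> k) (x y : {ffun I -> k})
  : {ffun I -> k} :=
  [ffun r => \sum_(p : I) \sum_(q : I) x p * y q * c p q r].

Definition bv (I : finType) (i : I) : {ffun I -> k} := [ffun j => (i == j)%:R].

Definition ctens (I J : finType) (c1 : I -> I -> I -> k) (c2 : J -> J -> J -> k)
  (p q r : I * J) : k := c1 p.1 q.1 r.1 * c2 p.2 q.2 r.2.

Definition tens (I J : finType) (x : {ffun I -> k}) (y : {ffun J -> k})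
  : {ffun I * J -> k} := [ffun p => x p.1 * y p.2].

Definition linext (I J : finType) (f : I -> {ffun J -> k}) (x : {ffun I -> k})
  : {ffun J -> k} := [ffun j => \sum_(i : I) x i * f i j].

Definition bunit (I : finType) (c : I -> I -> I -> k) (e x : {ffun I -> k}) :=
  exists y, bmul c x y = e /\ bmul c y x = e.

(* ---------- H_4: basis (i,j) |-> g^i h^j *)
Definition Hb := (bool * bool)%type.
(* g^i h^j * g^i' h^j' = (-1)^(j i') g^(i+i') h^(j+j'), zero if j = j' = 1 *)
Definition cH (p q r : Hb) : k :=
  if p.2 && q.2 then 0
  else if r == (xorb p.1 q.1, p.2 || q.2) then (if p.2 && q.1 then -1 else 1)
  else 0.
Definition H4 := {ffun Hb -> k}.
Definition oneH : H4 := bv (false, false).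
Definition gH : H4 := bv (true, false).
Definition hH : H4 := bv (false, true).

(* ---------- E_2 = k[h] subset H_4: basis j |-> h^j *)
Definition Eb := bool.
Definition cE (p q r : Eb) : k :=
  if p && q then 0 else if r == (p || q) then 1 else 0.
Definition E2 := {ffun Eb -> k}.
Definition oneE : E2 := bv false.

Definition cEH := ctens cE cH.
Definition cEHH := ctens cEH cH.
Definition EH := {ffun Eb * Hb -> k}.
Definition EHH := {ffun Eb * Hb * Hb -> k}.
Definition oneEH : EH := tens oneE oneH.

(* ---------- comultiplication of H_4 on the basis:
   D(1) = 1(x)1, D(g) = g(x)g, D(h) = h(x)g + 1(x)h, D(gh) = gh(x)1 + g(x)gh *)
Definition DeltaB (p : Hb) : {ffun Hb * Hb -> k} :=
  match p with
  | (false, false) => tens (bv (false,false)) (bv (false,false))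
  | (true, false) => tens (bv (true,false)) (bv (true,false))
  | (false, true) => [ffun r => tens (bv (false,true)) (bv (true,false)) r
                     + tens (bv (false,false)) (bv (false,true)) r]
  | (true, true) => [ffun r => tens (bv (true,true)) (bv (false,false)) r
                    + tens (bv (true,false)) (bv (true,true)) r]
  end.

(* coaction of E_2: restriction of Delta: 1 |-> 1(x)1, h |-> h(x)g + 1(x)h *)
Definition DeltaEB (p : Eb) : EH :=
  if p then [ffun r => tens (bv true) gH r + tens (bv false) hH r]
  else tens (bv false) oneH.
Definition DeltaE (x : E2) : EH := linext DeltaEB x.

Definition d0E (x : E2) : EH := DeltaE x.
Definition d1E (x : E2) : EH := tens x oneH.
(* (Delta_E (x) id) *)
Definition d0EH (X : EH) : EHH :=
  linext (fun p : Eb * Hb => tens (DeltaEB p.1) (bv p.2)) X.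
(* (id (x) Delta_H), reassociated to (E (x) H) (x) H *)
Definition d1EH (X : EH) : EHH :=
  linext (fun p : Eb * Hb =>
            [ffun r : Eb * Hb * Hb => bv p.1 r.1.1 * DeltaB p.2 (r.1.2, r.2)]) X.
Definition d2EH (X : EH) : EHH := tens X oneH.

Definition H0mem (x : E2) : Prop := bunit cE oneE x /\ d0E x = d1E x.

Definition Z1cocycle (X : EH) : Prop :=
  bunit cEH oneEH X /\ bmul cEHH (d2EH X) (d0EH X) = d1EH X.

Definition orbit_rel1 (X Y : EH) : Prop :=
  exists x xi : E2, bmul cE x xi = oneE /\ bmul cE xi x = oneE /\
    Y = bmul cEH (bmul cEH (d1E xi) X) (d0E x).

End Sweedler.

From HB Require Import structures.
From mathcomp Require Import all_boot all_order all_algebra.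
From mathcomp Require Import ring.
Import GRing.Theory.
Local Open Scope ring_scope.

(* All algebras are given by coordinate vectors over a finite basis, so every
   claim reduces to polynomial identities among coordinates.  We first develop
   a little theory of algebras given by structure constants (basis products,
   unit laws, products of elementary tensors), then compute in E_2 and in
   E_2 (x) H_4 in coordinates.
   - H^0: x is a unit iff its constant term is nonzero, and d0 x = d1 x iff
     its h-coefficient vanishes; together, H^0 = k^x.
   - 1 (x) 1 and 1 (x) g are cocycles because 1 and g are involutive
     grouplike basis elements.
   - Writing a cocycle X through its eight coordinates a0..a3 (on 1 (x) g^i h^j)
     and b0..b3 (on h (x) g^i h^j), thirteen coordinates of the cocycle identity
     force X to be the twist of 1 (x) 1 by the unit 1 + a2 h when a0 != 0, and
     the twist of 1 (x) g by 1 + a3 h when a0 = 0 (then a1 != 0 since X is a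
     unit).
   - The two classes differ: every twist of 1 (x) 1 has no 1 (x) g coordinate. *)

Section SweedlerCohomology.
Variable k : fieldType.

Ltac simpl_coef :=
  rewrite ?(mulr0, mul0r, mulr1, mul1r, addr0, add0r, mulrN1, mulrN, mulNr, oppr0, subr0).

(* Coordinates of X in E_2 (x) H_4: a_i on 1 (x) g^e h^f, b_i on h (x) g^e h^f,
   with i = e + 2 f. *)
Local Notation a0 X := (X (false, (false, false))).
Local Notation a1 X := (X (false, (true, false))).
Local Notation a2 X := (X (false, (false, true))).
Local Notation a3 X := (X (false, (true, true))).
Local Notation b0 X := (X (true, (false, false))).
Local Notation b1 X := (X (true, (true, false))).
Local Notation b2 X := (X (true, (false, true))).
Local Notation b3 X := (X (true, (true, true))).

Lemma sum_pair (I J : finType) (F : I * J -> k) :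
  \sum_(p : I * J) F p = \sum_(i : I) \sum_(j : J) F (i, j).
Proof. by rewrite pair_bigA; apply: eq_bigr => -[]. Qed.

Lemma sum_pick (I : finType) (F : I -> k) (s : I) :
  \sum_(i : I) F i * (i == s)%:R = F s.
Proof.
rewrite (bigD1 s) //= eqxx mulr1 big1 ?addr0 // => i /negbTE ni.
by rewrite ni mulr0.
Qed.

Lemma sum_Hb (F : Hb -> k) : \sum_(p : Hb) F p =
  F (true, true) + F (true, false) + (F (false, true) + F (false, false)).
Proof. by rewrite sum_pair !big_bool. Qed.

Lemma sum_EH (F : Eb * Hb -> k) : \sum_(p : Eb * Hb) F p =
  F (true, (true, true)) + F (true, (true, false))
    + (F (true, (false, true)) + F (true, (false, false)))
  + (F (false, (true, true)) + F (false, (true, false))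
    + (F (false, (false, true)) + F (false, (false, false)))).
Proof. by rewrite sum_pair !big_bool !sum_Hb. Qed.

Lemma bmul_bv (I : finType) (c : I -> I -> I -> k) (a b : I) :
  bmul c (bv k a) (bv k b) = [ffun r => c a b r].
Proof.
apply/ffunP=> r; rewrite !ffunE (bigD1 a) //= [X in _ + X]big1 ?addr0; last first.
  by move=> p /negbTE pa; rewrite big1 // => q _; rewrite [bv k a p]ffunE eq_sym pa !mul0r.
rewrite (bigD1 b) //= [X in _ + X]big1 ?addr0; last first.
  by move=> q /negbTE qb; rewrite [bv k b q]ffunE eq_sym qb mulr0 mul0r.
by rewrite !ffunE !eqxx !mul1r.
Qed.

Lemma bmulZr (I : finType) (c : I -> I -> I -> k) (x y : {ffun I -> k}) (a : k) :
  bmul c x [ffun q => a * y q] = [ffun r => a * bmul c x y r].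
Proof.
apply/ffunP=> r; rewrite !ffunE mulr_sumr; apply: eq_bigr => p _.
rewrite mulr_sumr; apply: eq_bigr => q _.
by rewrite ffunE mulrCA !mulrA.
Qed.

Lemma bmul_unitr (I : finType) (c : I -> I -> I -> k) (e : I) (x : {ffun I -> k}) :
  (forall p r, c p e r = (p == r)%:R) -> bmul c x (bv k e) = x.
Proof.
move=> ce; apply/ffunP=> r; rewrite ffunE -[RHS](@sum_pick _ x r).
apply: eq_bigr => p _; rewrite (bigD1 e) //= [X in _ + X]big1 ?addr0.
  by rewrite ffunE eqxx mulr1 ce.
by move=> q /negbTE qe; rewrite ffunE eq_sym qe mulr0 mul0r.
Qed.

Lemma tens_bv (I J : finType) (i : I) (j : J) : tens (bv k i) (bv k j) = bv k (i, j).
Proof. by apply/ffunP=> -[a b]; rewrite !ffunE /= -natrM mulnb xpair_eqE. Qed.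

Lemma bmul_tens (I J : finType) (c1 : I -> I -> I -> k) (c2 : J -> J -> J -> k)
    (x x' : {ffun I -> k}) (y y' : {ffun J -> k}) :
  bmul (ctens c1 c2) (tens x y) (tens x' y') = tens (bmul c1 x x') (bmul c2 y y').
Proof.
apply/ffunP=> -[r1 r2]; rewrite !ffunE /= sum_pair big_distrl /=.
apply: eq_bigr => p1 _; rewrite big_distrl /= exchange_big /=.
rewrite sum_pair; apply: eq_bigr => q1 _; rewrite exchange_big big_distrr /=.
apply: eq_bigr => p2 _; rewrite big_distrr /=; apply: eq_bigr => q2 _.
by rewrite !ffunE /ctens /=; ring.
Qed.

Lemma ctens_unitr (I J : finType) (c1 : I -> I -> I -> k) (c2 : J -> J -> J -> k)
    (e1 : I) (e2 : J) :
  (forall p r, c1 p e1 r = (p == r)%:R) -> (forall p r, c2 p e2 r = (p == r)%:R) ->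
  forall p r, ctens c1 c2 p (e1, e2) r = (p == r)%:R.
Proof. by move=> h1 h2 [p1 p2] [r1 r2]; rewrite /ctens /= h1 h2 -natrM mulnb xpair_eqE. Qed.

Lemma cE_unitr (p r : Eb) : cE k p false r = (p == r)%:R.
Proof. by case: p r => -[]. Qed.

Lemma cH_unitr (p r : Hb) : cH k p (false, false) r = (p == r)%:R.
Proof. by case: p r => [[] []] [[] []]. Qed.

Lemma mulH1l (p : Hb) : bmul (cH k) (oneH k) (bv k p) = bv k p.
Proof.
by rewrite bmul_bv; apply/ffunP=> r; rewrite !ffunE; case: p r => [[] []] [[] []].
Qed.

Lemma g_involutive : bmul (cH k) (gH k) (gH k) = oneH k.
Proof. by rewrite bmul_bv; apply/ffunP=> -[[] []]; rewrite !ffunE. Qed.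

Lemma mulEH1 (X : EH k) : bmul (cEH k) X (oneEH k) = X.
Proof.
rewrite /oneEH tens_bv bmul_unitr // => p r.
by apply: ctens_unitr => [p1 r1 | p2 r2]; [exact: cE_unitr | exact: cH_unitr].
Qed.

Lemma mulE_coord (x y : E2 k) : bmul (cE k) x y =
  [ffun j : Eb => if j then x true * y false + x false * y true else x false * y false].
Proof. by apply/ffunP=> -[]; rewrite !ffunE !big_bool /cE /=; simpl_coef. Qed.

Lemma unitE (x : E2 k) : bunit (cE k) (oneE k) x <-> x false != 0.
Proof.
split=> [[y [xy _]] | x0].
  apply/eqP=> x0; move/ffunP/(_ false): xy.
  by rewrite mulE_coord !ffunE x0 mul0r => /eqP; rewrite eq_sym oner_eq0.
exists [ffun j : Eb => if j then - x true / x false ^+ 2 else (x false)^-1].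
by split; apply/ffunP=> -[]; rewrite mulE_coord !ffunE /=; field.
Qed.

Lemma DeltaE_coord (x : E2 k) r :
  DeltaE x r = x true * DeltaEB k true r + x false * DeltaEB k false r.
Proof. by rewrite ffunE big_bool. Qed.

(* The coinvariants of E_2 are the scalars: the 1 (x) h coordinate of
   Delta_E x is the h-coefficient of x. *)
Lemma coinvariantE (x : E2 k) : d0E x = d1E x <-> x true = 0.
Proof.
split=> [/ffunP/(_ (false, (false, true))) | x1].
  by rewrite DeltaE_coord !ffunE /=; simpl_coef.
apply/ffunP=> -[j q]; rewrite DeltaE_coord x1 mul0r add0r !ffunE /=.
by case: j; rewrite ?x1; simpl_coef.
Qed.

Lemma H0_scalars (x : E2 k) :
  H0mem x <-> exists c : k, c != 0 /\ x = [ffun i => c * oneE k i].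
Proof.
rewrite /H0mem unitE coinvariantE; split=> [[x0 x1] | [c [c0 ->]]].
  exists (x false); split=> //.
  by apply/ffunP=> -[]; rewrite !ffunE /= ?x1; simpl_coef.
by rewrite !ffunE /=; simpl_coef.
Qed.

(* Coordinates of the coface maps.  The third coface only involves the last
   tensor factor, so d2(X) Y is computed slice by slice. *)
Definition slice (Y : EHH k) (s : Hb) : EH k := [ffun q => Y (q, s)].

Lemma d2EH_mul (X : EH k) (Y : EHH k) r s :
  bmul (cEHH k) (d2EH X) Y (r, s) = bmul (cEH k) X (slice Y s) r.
Proof.
rewrite /bmul !ffunE sum_pair; apply: eq_bigr => p _.
rewrite (bigD1 (false, false)) //= [X in _ + X]big1 ?addr0; last first.
  move=> p2 hp2; rewrite big1 // => q _.
  by rewrite /d2EH /tens /oneH /bv !ffunE /= eq_sym (negbTE hp2) mulr0 !mul0r.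
rewrite sum_pair; apply: eq_bigr => q _.
rewrite (bigD1 s) //= [X in _ + X]big1 ?addr0; last first.
  move=> q2 hq2; rewrite /cEHH /ctens /= /cH /=.
  by case: s hq2 => -[] []; case: q2 => -[] [] //= _; rewrite ?mulr0.
rewrite /d2EH /tens /oneH /bv /slice !ffunE /= mulr1 /cEHH /ctens /= /cH /=.
by case: s => -[] [] /=; rewrite mulr1.
Qed.

Lemma d0EH_coord (X : EH k) q s :
  d0EH X (q, s) = X (true, s) * DeltaEB k true q + X (false, s) * DeltaEB k false q.
Proof.
rewrite /d0EH /linext ffunE sum_pair.
under eq_bigr => b _ do under eq_bigr => j _ do rewrite !ffunE /= mulrA.
by under eq_bigr => b _ do rewrite sum_pick; rewrite big_bool.
Qed.

Lemma d1EH_coord (X : EH k) j q s :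
  d1EH X ((j, q), s) = \sum_(i : Hb) X (j, i) * DeltaB k i (q, s).
Proof.
rewrite /d1EH /linext ffunE sum_pair big_bool /=.
case: j; [rewrite [X in _ + X]big1 ?addr0 | rewrite [X in X + _]big1 ?add0r];
  do ?[by move=> i _; rewrite !ffunE mul0r mulr0];
  by apply: eq_bigr => i _; rewrite !ffunE mul1r.
Qed.

Lemma grouplike_cocycle (p : Hb) :
  DeltaB k p = tens (bv k p) (bv k p) -> bmul (cH k) (bv k p) (bv k p) = oneH k ->
  Z1cocycle (tens (oneE k) (bv k p)).
Proof.
move=> Dp pp; split.
  have oneE2 : bmul (cE k) (oneE k) (oneE k) = oneE k by apply: bmul_unitr cE_unitr.
  by exists (tens (oneE k) (bv k p)); rewrite bmul_tens oneE2 pp.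
rewrite /oneE tens_bv.
have sliceE s : slice (d0EH (bv k (false, p))) s = [ffun q => (p == s)%:R * oneEH k q].
  by apply/ffunP=> q; rewrite [LHS]ffunE d0EH_coord !ffunE !xpair_eqE /= mul0r add0r.
apply/ffunP=> -[[j q] s]; rewrite d2EH_mul sliceE bmulZr mulEH1 d1EH_coord.
under eq_bigr => i _ do rewrite ffunE xpair_eqE -mulnb natrM mulrAC (eq_sym p).
rewrite sum_pick Dp !ffunE /= xpair_eqE -mulnb !natrM.
by rewrite mulrC -mulrA.
Qed.

Ltac mulEH_coord :=
  by rewrite /bmul ffunE !sum_EH /cEH /ctens /cE /cH /=; simpl_coef; simpl_coef.

Lemma mulEH_a0 (X Y : EH k) : a0 (bmul (cEH k) X Y) = a1 X * a1 Y + a0 X * a0 Y.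
Proof. mulEH_coord. Qed.

Lemma mulEH_a1 (X Y : EH k) : a1 (bmul (cEH k) X Y) = a1 X * a0 Y + a0 X * a1 Y.
Proof. mulEH_coord. Qed.

Lemma mulEH_a2 (X Y : EH k) : a2 (bmul (cEH k) X Y) =
  - (a3 X * a1 Y) + a1 X * a3 Y + (a2 X * a0 Y + a0 X * a2 Y).
Proof. mulEH_coord. Qed.

Lemma mulEH_a3 (X Y : EH k) : a3 (bmul (cEH k) X Y) =
  a3 X * a0 Y + a1 X * a2 Y + (- (a2 X * a1 Y) + a0 X * a3 Y).
Proof. mulEH_coord. Qed.

Lemma mulEH_b0 (X Y : EH k) : b0 (bmul (cEH k) X Y) =
  b1 X * a1 Y + b0 X * a0 Y + (a1 X * b1 Y + a0 X * b0 Y).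
Proof. mulEH_coord. Qed.

Lemma mulEH_b1 (X Y : EH k) : b1 (bmul (cEH k) X Y) =
  b1 X * a0 Y + b0 X * a1 Y + (a1 X * b0 Y + a0 X * b1 Y).
Proof. mulEH_coord. Qed.

Lemma mulEH_b2 (X Y : EH k) : b2 (bmul (cEH k) X Y) =
  - (b3 X * a1 Y) + b1 X * a3 Y + (b2 X * a0 Y + b0 X * a2 Y)
  + (- (a3 X * b1 Y) + a1 X * b3 Y + (a2 X * b0 Y + a0 X * b2 Y)).
Proof. mulEH_coord. Qed.

Lemma mulEH_b3 (X Y : EH k) : b3 (bmul (cEH k) X Y) =
  b3 X * a0 Y + b1 X * a2 Y + (- (b2 X * a1 Y) + b0 X * a3 Y)
  + (a3 X * b0 Y + a1 X * b2 Y + (- (a2 X * b1 Y) + a0 X * b3 Y)).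
Proof. mulEH_coord. Qed.

Ltac mulEH_expand :=
  rewrite ?(mulEH_a0, mulEH_a1, mulEH_a2, mulEH_a3,
            mulEH_b0, mulEH_b1, mulEH_b2, mulEH_b3).

Ltac cocycle_at H r s :=
  move: (H (r, s)); rewrite d2EH_mul; mulEH_expand;
  rewrite ![slice _ _ _]ffunE !d0EH_coord d1EH_coord sum_Hb
    /DeltaEB /DeltaB /tens /gH /hH /oneH /bv !ffunE /=; simpl_coef.

Lemma cocycle_equations (X : EH k) :
  bmul (cEHH k) (d2EH X) (d0EH X) = d1EH X ->
  [/\ [/\ a0 X * a0 X = a0 X, a0 X * a1 X = 0, a0 X * a3 X = 0,
          a1 X * a1 X = a1 X & a1 X * a2 X = 0],
      [/\ a2 X * a0 X + a0 X * b0 X = 0, a2 X * a1 X + a0 X * b1 X = a2 X,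
          a2 X * a2 X + a0 X * b2 X = 0 & a2 X * a3 X + a0 X * b3 X = 0] &
      [/\ a3 X * a0 X + a1 X * b0 X = a3 X, a3 X * a1 X + a1 X * b1 X = 0,
          a3 X * a2 X + a1 X * b2 X = 0 & a3 X * a3 X + a1 X * b3 X = 0]].
Proof.
move/ffunP=> H; split; [split | split | split].
- by cocycle_at H (false, (false, false)) (false, false).
- by cocycle_at H (false, (false, false)) (true, false).
- by cocycle_at H (false, (false, false)) (true, true).
- by cocycle_at H (false, (true, false)) (true, false).
- by cocycle_at H (false, (true, false)) (false, true).
- by cocycle_at H (false, (false, true)) (false, false).
- by cocycle_at H (false, (false, true)) (true, false).
- by cocycle_at H (false, (false, true)) (false, true).
- by cocycle_at H (false, (false, true)) (true, true).
- by cocycle_at H (false, (true, true)) (false, false).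
- by cocycle_at H (false, (true, true)) (true, false).
- by cocycle_at H (false, (true, true)) (false, true).
- by cocycle_at H (false, (true, true)) (true, true).
Qed.

(* A unit of E_2 (x) H_4 maps to a unit of k[g]: a0 and a1 do not both vanish. *)
Lemma unitEH_nonzero (X : EH k) : bunit (cEH k) (oneEH k) X -> a0 X = 0 -> a1 X != 0.
Proof.
move=> [Y [/ffunP/(_ (false, (false, false))) XY _]] a0E; apply/eqP=> a1E.
move: XY; rewrite mulEH_a0 a0E a1E !mul0r addr0 !ffunE /= mulr1.
by move/eqP; rewrite eq_sym oner_eq0.
Qed.

Definition one_plus_h (t : k) : E2 k := [ffun j : Eb => if j then t else 1].

Lemma one_plus_h_inverse (t : k) :
  bmul (cE k) (one_plus_h t) (one_plus_h (- t)) = oneE k /\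
  bmul (cE k) (one_plus_h (- t)) (one_plus_h t) = oneE k.
Proof.
by split; apply/ffunP=> -[]; rewrite mulE_coord !ffunE /=; simpl_coef;
  rewrite ?subrr ?addNr.
Qed.

Lemma orbit_one_plus_h (X : EH k) (t : k) :
  orbit_rel1 X
    (bmul (cEH k) (bmul (cEH k) (d1E (one_plus_h (- t))) X) (d0E (one_plus_h t))).
Proof.
by have [? ?] := one_plus_h_inverse t; exists (one_plus_h t), (one_plus_h (- t)).
Qed.

Lemma d1E_mul_one_tens (x : E2 k) (p : Hb) :
  bmul (cEH k) (d1E x) (tens (oneE k) (bv k p)) = tens x (bv k p).
Proof. by rewrite bmul_tens mulH1l bmul_unitr //; exact: cE_unitr. Qed.

(* The twists of 1 (x) 1 and of 1 (x) g by the unit 1 + t h. *)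
Definition twist_one (t : k) : EH k := [ffun p : Eb * Hb =>
  match p return k with
  | (false, (false, false)) => 1
  | (false, (false, true)) => t
  | (true, (true, false)) => t
  | (true, (false, false)) => - t
  | (true, (false, true)) => - t ^+ 2
  | _ => 0
  end].

Definition twist_g (t : k) : EH k := [ffun p : Eb * Hb =>
  match p return k with
  | (false, (true, false)) => 1
  | (false, (true, true)) => t
  | (true, (false, false)) => t
  | (true, (true, false)) => - t
  | (true, (true, true)) => - t ^+ 2
  | _ => 0
  end].

(* Both twists are computed from d1(1 - t h) (1 (x) u) = (1 - t h) (x) u. *)
Ltac twist_coord :=
  rewrite d1E_mul_one_tens; apply/ffunP=> -[[] [[] []]]; mulEH_expand;
  rewrite /d0E !DeltaE_coord /DeltaEB /tens /gH /hH /bv !ffunE /=; simpl_coef.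

Lemma twist_oneE (t : k) :
  bmul (cEH k) (bmul (cEH k) (d1E (one_plus_h (- t))) (oneEH k)) (d0E (one_plus_h t)) =
  twist_one t.
Proof. by twist_coord. Qed.

Lemma twist_gE (t : k) :
  bmul (cEH k) (bmul (cEH k) (d1E (one_plus_h (- t))) (tens (oneE k) (gH k)))
    (d0E (one_plus_h t)) =
  twist_g t.
Proof. by twist_coord. Qed.

Lemma cocycle_a0_nonzero (X : EH k) :
  Z1cocycle X -> a0 X != 0 -> X = twist_one (a2 X).
Proof.
move=> [_ /cocycle_equations [[e00 e01 e03 _ _] [e20 e21 e22 e23] _]] a0nz.
have a0E : a0 X = 1 by apply: (mulfI a0nz); rewrite e00 mulr1.
move: e01 e03 e20 e21 e22 e23; rewrite a0E !mul1r !mulr1 => a1E a3E e20 e21 e22 e23.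
move: e21 e23; rewrite a1E a3E !mulr0 !add0r => b1E b3E.
have b0E := addr0_eq e20; have b2E := addr0_eq e22.
by apply/ffunP=> -[[] [[] []]]; rewrite ffunE /= -?expr2.
Qed.

Lemma cocycle_a0_zero (X : EH k) :
  Z1cocycle X -> a0 X = 0 -> X = twist_g (a3 X).
Proof.
move=> [unitX /cocycle_equations [[_ _ _ e11 e12] _ [e30 e31 e32 e33]]] a0E.
have a1E : a1 X = 1.
  by apply: (mulfI (unitEH_nonzero X unitX a0E)); rewrite e11 mulr1.
move: e12 e30 e31 e32 e33; rewrite a1E a0E !mul1r !mulr1 mulr0 add0r.
move=> a2E b0E e31 e32 e33; move: e32; rewrite a2E mulr0 add0r => b2E.
have b1E := addr0_eq e31; have b3E := addr0_eq e33.
by apply/ffunP=> -[[] [[] []]]; rewrite ffunE /= -?expr2.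
Qed.

Lemma orbit_one_no_g (x xi : E2 k) :
  a1 (bmul (cEH k) (bmul (cEH k) (d1E xi) (oneEH k)) (d0E x)) = 0.
Proof.
rewrite d1E_mul_one_tens mulEH_a1.
by rewrite /d0E !DeltaE_coord /DeltaEB /tens /gH /hH /bv !ffunE /=; simpl_coef.
Qed.

Lemma one_g_not_cohomologous :
  ~ orbit_rel1 (tens (oneE k) (oneH k)) (tens (oneE k) (gH k)).
Proof.
move=> [x [xi [_ [_ /ffunP/(_ (false, (true, false)))]]]].
by rewrite orbit_one_no_g !ffunE /= mulr1 => /eqP; rewrite oner_eq0.
Qed.

End SweedlerCohomology.

Theorem proposition1p6 (k : fieldType) :
  (forall x : E2 k, H0mem x <-> exists c : k, c != 0 /\ x = [ffun i => c * oneE k i]) /\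
  Z1cocycle (tens (oneE k) (oneH k)) /\ Z1cocycle (tens (oneE k) (gH k)) /\
  ~ orbit_rel1 (tens (oneE k) (oneH k)) (tens (oneE k) (gH k)) /\
  (forall X : EH k, Z1cocycle X ->
     orbit_rel1 (tens (oneE k) (oneH k)) X \/ orbit_rel1 (tens (oneE k) (gH k)) X).
Proof.
have cocycle_one : Z1cocycle (tens (oneE k) (oneH k)).
  exact: (grouplike_cocycle k (false, false) erefl (mulH1l k (false, false))).
have cocycle_g : Z1cocycle (tens (oneE k) (gH k)).
  exact: (grouplike_cocycle k (true, false) erefl (g_involutive k)).
split; first exact: H0_scalars.
split; first exact: cocycle_one.
split; first exact: cocycle_g.
split; first exact: one_g_not_cohomologous.
move=> X cX; case: (eqVneq (X (false, (false, false))) 0) => [a0E | a0nz].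
  by right; rewrite (cocycle_a0_zero k X cX a0E) -twist_gE; apply: orbit_one_plus_h.
by left; rewrite (cocycle_a0_nonzero k X cX a0nz) -twist_oneE; apply: orbit_one_plus_h.
Qed.
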